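(* Let $f(\alpha,\beta)$, $g(\alpha,\beta)$, $h(\alpha)$ be $2\pi$-periodic in each argument and suppose there is a constant $c\neq0$ such that for all $\alpha,\beta$: $f(\alpha,\beta)=-f(\beta,\alpha)$, $g(\alpha,\beta)=-g(\beta,\alpha)$, $h(\alpha)h(\alpha+\pi)=c$, $f(\alpha,\beta)f(\alpha+\pi,\beta)=-c$, and $g(\alpha,\beta)=c^{-1}f(\alpha,\beta)h(\alpha)h(\beta)$. Then the quad-equation $$f(\theta,\theta')x_{B'}-g(\theta,\theta')x_B=i\big(h(\theta')x_{W'}-h(\theta)x_W\big)$$ is 3D-consistent (in the sense described in the context) if and only if for all $\alpha,\beta,\gamma$ $$f(\alpha,\beta)h(\alpha)h(\beta)+f(\beta,\gamma)h(\beta)h(\gamma)+f(\gamma,\alpha)h(\gamma)h(\alpha)=f(\alpha,\beta)f(\beta,\gamma)f(\gamma,\alpha),$$ which is equivalent to $$g(\alpha,\beta)+g(\beta,\gamma)+g(\gamma,\alpha)=c^{-1}f(\alpha,\beta)f(\beta,\gamma)f(\gamma,\alpha).$$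
   Context: The quad-equation is imposed on a rhombus with black vertices $B,B'$ and white vertices $W,W'$, where $\theta,\theta'$ are the labels of the edges $B\to W$, $B\to W'$, i.e. $e^{i\theta}=W-B$, $e^{i\theta'}=W'-B$ as points in $\mathbb C$. Under the stated symmetry conditions this equation is the same (up to a nonzero factor) whichever black vertex is taken as $B$ and in whichever order $W,W'$ are taken. 3D-consistency: consider a combinatorial cube with vertices $x_I$, $I\subseteq\{1,2,3\}$, placed at formal points $P_I=\sum_{i\in I}e^{i\alpha_i}$ with $(\alpha_1,\alpha_2,\alpha_3)=(\alpha,\beta,\gamma)$; $x_I$ is black if $|I|$ is even and white otherwise, every edge joins a black and a white vertex, and the edge label $\theta$ of an edge from black $P$ to white $Q$ is defined by $e^{i\theta}=Q-P$. Impose the quad-equation on all six faces. For generic initial values $x_\emptyset,x_1,x_2,x_3$, the three faces containing $x_\emptyset$ determine $x_{12},x_{13},x_{23}$, and then each of the three faces containing $x_{123}$ determines a value of $x_{123}$. The equation is 3D-consistent if these three values of $x_{123}$ coincide for all initial data. *)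

From mathcomp Require Import all_boot all_order all_algebra.
From mathcomp Require Import complex.
From mathcomp Require Import reals trigo.

Set Implicit Arguments.
Unset Strict Implicit.
Unset Printing Implicit Defensive.

Import GRing.Theory Num.Theory.
Local Open Scope ring_scope.

Definition expi (R : realType) (t : R) : R[i] := Complex (cos t) (sin t).

(* the two angles a, b span a genuine (non-degenerate) rhombus:
   e^{ia} <> +- e^{ib}, i.e. a - b is not an integer multiple of pi *)
Definition nondeg (R : realType) (a b : R) : Prop :=
  forall k : int, a - b != k%:~R * pi.

(* The quad-equation with labels th (edge B -> W) and th' (edge B -> W'):
   f(th,th') x_B' - g(th,th') x_B = i (h(th') x_W' - h(th) x_W) *)
Definition quad (R : realType) (f g : R -> R -> R[i]) (h : R -> R[i])
  (th th' : R) (xB xB' xW xW' : R[i]) : Prop :=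
  f th th' * xB' - g th th' * xB = 'i%C * (h th' * xW' - h th * xW).

Definition face_eq (R : realType) (f g : R -> R -> R[i]) (h : R -> R[i])
  (B B' W W' : R[i]) (xB xB' xW xW' : R[i]) : Prop :=
  forall th th' : R, expi th = W - B -> expi th' = W' - B ->
    quad f g h th th' xB xB' xW xW'.

(* 3D-consistency on the cube with vertices P_I = sum_{i in I} e^{i alpha_i},
   (alpha_1, alpha_2, alpha_3) = (a, b, d).  Black: P_0, P_12, P_13, P_23;
   white: P_1, P_2, P_3, P_123. *)
Definition consistent3D (R : realType) (f g : R -> R -> R[i]) (h : R -> R[i])
  (a b d : R) : Prop :=
  let P1 := expi a in let P2 := expi b in let P3 := expi d in
  let P0 := 0 : R[i] in
  let P12 := P1 + P2 in let P13 := P1 + P3 in let P23 := P2 + P3 in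
  let P123 := P1 + P2 + P3 in
  forall x0 x1 x2 x3 x12 x13 x23 : R[i],
    face_eq f g h P0 P12 P1 P2 x0 x12 x1 x2 ->
    face_eq f g h P0 P13 P1 P3 x0 x13 x1 x3 ->
    face_eq f g h P0 P23 P2 P3 x0 x23 x2 x3 ->
    forall y z w : R[i],
      face_eq f g h P12 P13 P1 P123 x12 x13 x1 y ->
      face_eq f g h P12 P23 P2 P123 x12 x23 x2 z ->
      face_eq f g h P13 P23 P3 P123 x13 x23 x3 w ->
      y = z /\ z = w.

From mathcomp Require Import all_boot all_order all_algebra.
From mathcomp Require Import complex.
From mathcomp Require Import reals trigo.
From mathcomp Require Import ring lra.
Import Order.TTheory GRing.Theory Num.Theory.
Local Open Scope ring_scope.
Set Implicit Arguments.
Unset Strict Implicit.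

(* The face equation is affine in each vertex value, with the nonzero
   coefficients f(th,th') and i h(th'); so the faces through x_0 determine
   x_12, x_13, x_23, and each face through x_123 determines a value y, z, w
   of x_123.  Eliminating h(t + pi) = c / h(t), f(t + pi, s) = - c / f(t, s)
   and g = c^-1 f h h, the differences factor as
     y - z = c / (f(a,b) f(a,d) f(b,d) h(d)) (x_1 / h(b) - x_2 / h(a)) D,
     z - w = c / (f(a,b) f(a,d) f(b,d) h(a)) (x_2 / h(d) - x_3 / h(b)) D,
   where D is the difference of the two sides of the identity; hence
   consistency for all initial data is equivalent to D = 0.  Edge labels are
   only determined modulo 2 pi, which the periodicity makes harmless. *)

Lemma periodicz (U V : zmodType) (F : U -> V) (T : U) :
  periodic F T -> forall (k : int) x, F (x + T *~ k) = F x.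
Proof.
move=> FT [] n x; first exact: periodicn.
by rewrite NegzE mulrNz -[in RHS](subrK (T *+ n.+1) x) periodicn.
Qed.

Lemma periodicz2 (U V : zmodType) (F : U -> U -> V) (T : U) :
  (forall x y, F (x + T) y = F x y /\ F x (y + T) = F x y) ->
  forall (k l : int) x y, F (x + T *~ k) (y + T *~ l) = F x y.
Proof.
move=> FT k l x y.
rewrite (periodicz (F := F _)) => [|u]; last exact: (FT _ u).2.
by rewrite (periodicz (F := F^~ y)) // => u; exact: (FT u y).1.
Qed.

Section Angles.
Variable R : realType.
Implicit Types a b t : R.

Lemma expiDpi t : expi (t + pi) = - expi t.
Proof. by rewrite /expi cosDpi sinDpi. Qed.

Lemma cos_eq1_itv t : 0 <= t < 2 * pi -> cos t = 1 -> t = 0.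
Proof.
move=> /andP[t_ge0 t_lt2pi] cos_t.
have pi_gt0 := @pi_gt0 R.
have cos_inj_1 u : 0 <= u <= pi -> cos u = 1 -> u = 0.
  move=> /andP[u_ge0 u_lepi] cos_u; apply: cos_inj; rewrite ?cos0 //.
  - by rewrite in_itv /= u_ge0 u_lepi.
  - by rewrite in_itv /= lexx; lra.
have [t_lepi|t_gtpi] := lerP t pi; first by apply: cos_inj_1; rewrite ?t_ge0.
suff : 2 * pi - t = 0 by lra.
apply: cos_inj_1; first by apply/andP; split; lra.
by rewrite cosB mulr_natl cos2pi sin2pi cos_t; ring.
Qed.

Lemma expi_eq_mod2pi a t : expi t = expi a -> exists k : int, t = a + (2 * pi) *~ k.
Proof.
case=> cos_ta sin_ta.
have cos_diff : cos (t - a) = 1 by rewrite cosB cos_ta sin_ta -!expr2 cos2Dsin2.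
have twopi_gt0 : 0 < 2 * pi :> R by rewrite mulr_gt0 ?pi_gt0.
pose k := Num.floor ((t - a) / (2 * pi)).
exists k.
have /andP[k_le k_gt] := floor_itv ((t - a) / (2 * pi)).
rewrite ler_pdivlMr // in k_le.
rewrite ltr_pdivrMr // intrD mulrDl mul1r in k_gt.
have cos_cos2pi : periodic (@cos R) (2 * pi) by move=> u; rewrite mulr_natl cosD2pi.
suff : t - a - (2 * pi) *~ k = 0 by move/eqP; rewrite subr_eq0 => /eqP <-; ring.
apply: cos_eq1_itv; first by rewrite -mulrzr -/k; apply/andP; split; lra.
by rewrite -mulrzr -(periodicz cos_cos2pi k) mulrzr subrK.
Qed.

Lemma nondeg_sym a b : nondeg a b -> nondeg b a.
Proof.
move=> nab k; apply/eqP => e; move/eqP: (nab (- k)); apply.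
by rewrite intrN mulNr -e opprB.
Qed.

Lemma nondegDpi a b : nondeg a b -> nondeg (a + pi) b.
Proof.
move=> nab k; apply/eqP => e; move/eqP: (nab (k - 1)); apply.
by rewrite intrB mulrBl mul1r -e; ring.
Qed.

End Angles.

Lemma i_neq0 (R : rcfType) : 'i%C != 0 :> R[i].
Proof. by apply/eqP; case => /eqP; rewrite oner_eq0. Qed.

Section QuadCube.
Variables (R : realType) (f g : R -> R -> R[i]) (h : R -> R[i]) (c : R[i]).

Lemma quad_xB'E (th th' : R) : f th th' != 0 -> forall xB xB' xW xW' : R[i],
  quad f g h th th' xB xB' xW xW' <->
  xB' = (g th th' * xB + 'i%C * (h th' * xW' - h th * xW)) / f th th'.
Proof.
by move=> fth_neq0 xB xB' xW xW'; rewrite /quad; split=> [<-|->]; field.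
Qed.

Lemma quad_xW'E (th' : R) : h th' != 0 -> forall (th : R) (xB xB' xW xW' : R[i]),
  quad f g h th th' xB xB' xW xW' <->
  xW' = ((f th th' * xB' - g th th' * xB) / 'i%C + h th * xW) / h th'.
Proof.
move=> hth_neq0 th xB xB' xW xW'; rewrite /quad.
by split=> [->|->]; field; rewrite i_neq0 hth_neq0.
Qed.

Lemma quad_solvable_xB' (th th' : R) : f th th' != 0 ->
  forall xB xW xW' : R[i], exists xB', quad f g h th th' xB xB' xW xW'.
Proof. by move=> fth_neq0 xB xW xW'; eexists; apply/(quad_xB'E fth_neq0). Qed.

Lemma quad_solvable_xW' (th' : R) : h th' != 0 ->
  forall (th : R) (xB xB' xW : R[i]), exists xW', quad f g h th th' xB xB' xW xW'.
Proof. by move=> hth_neq0 th xB xB' xW; eexists; apply/(quad_xW'E hth_neq0). Qed.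

Hypothesis f_periodic : forall a b, f (a + 2 * pi) b = f a b /\ f a (b + 2 * pi) = f a b.
Hypothesis g_periodic : forall a b, g (a + 2 * pi) b = g a b /\ g a (b + 2 * pi) = g a b.
Hypothesis h_periodic : forall a, h (a + 2 * pi) = h a.

Lemma face_eqE (B W W' : R[i]) (th th' : R) :
  expi th = W - B -> expi th' = W' - B -> forall B' xB xB' xW xW' : R[i],
  face_eq f g h B B' W W' xB xB' xW xW' <-> quad f g h th th' xB xB' xW xW'.
Proof.
move=> eW eW' B' xB xB' xW xW'; split=> [|Q t t' et et']; first exact.
have [k ->] := expi_eq_mod2pi (etrans et (esym eW)).
have [l ->] := expi_eq_mod2pi (etrans et' (esym eW')).
by rewrite /quad !periodicz2 // !(periodicz h_periodic).
Qed.

Lemma consistent3D_quadE (a b d : R) :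
  consistent3D f g h a b d <->
  forall x0 x1 x2 x3 x12 x13 x23 : R[i],
    quad f g h a b x0 x12 x1 x2 ->
    quad f g h a d x0 x13 x1 x3 ->
    quad f g h b d x0 x23 x2 x3 ->
  forall y z w : R[i],
    quad f g h (b + pi) d x12 x13 x1 y ->
    quad f g h (a + pi) d x12 x23 x2 z ->
    quad f g h (a + pi) b x13 x23 x3 w ->
  y = z /\ z = w.
Proof.
(* On the faces through P_123 the edges P_12 -> P_1, P_12 -> P_2, P_13 -> P_3
   are - e^{ib}, - e^{ia}, - e^{ia}, i.e. carry the labels b + pi, a + pi, a + pi. *)
have e0_P (t : R) : expi t = expi t - 0 by rewrite subr0.
have e12_1 : expi (b + pi) = expi a - (expi a + expi b) by rewrite expiDpi; ring.
have e12_2 : expi (a + pi) = expi b - (expi a + expi b) by rewrite expiDpi; ring.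
have e13_3 : expi (a + pi) = expi d - (expi a + expi d) by rewrite expiDpi; ring.
have e12_123 : expi d = expi a + expi b + expi d - (expi a + expi b) by ring.
have e13_123 : expi b = expi a + expi b + expi d - (expi a + expi d) by ring.
have E1 := face_eqE (e0_P a) (e0_P b) (expi a + expi b).
have E2 := face_eqE (e0_P a) (e0_P d) (expi a + expi d).
have E3 := face_eqE (e0_P b) (e0_P d) (expi b + expi d).
have E4 := face_eqE e12_1 e12_123 (expi a + expi d).
have E5 := face_eqE e12_2 e12_123 (expi b + expi d).
have E6 := face_eqE e13_3 e13_123 (expi b + expi d).
rewrite /consistent3D /=.
split=> cube x0 x1 x2 x3 x12 x13 x23 F1 F2 F3 y z w F4 F5 F6.
- exact: cube _ _ _ _ _ _ _ ((E1 _ _ _ _).2 F1) ((E2 _ _ _ _).2 F2) ((E3 _ _ _ _).2 F3)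
    _ _ _ ((E4 _ _ _ _).2 F4) ((E5 _ _ _ _).2 F5) ((E6 _ _ _ _).2 F6).
- exact: cube _ _ _ _ _ _ _ ((E1 _ _ _ _).1 F1) ((E2 _ _ _ _).1 F2) ((E3 _ _ _ _).1 F3)
    _ _ _ ((E4 _ _ _ _).1 F4) ((E5 _ _ _ _).1 F5) ((E6 _ _ _ _).1 F6).
Qed.

Hypothesis c_neq0 : c != 0.
Hypothesis f_anti : forall a b, nondeg a b -> f a b = - f b a.
Hypothesis h_shift : forall a, h a * h (a + pi) = c.
Hypothesis f_shift : forall a b, nondeg a b -> f a b * f (a + pi) b = - c.
Hypothesis g_def : forall a b, nondeg a b -> g a b = c^-1 * f a b * h a * h b.

Lemma h_neq0 (a : R) : h a != 0.
Proof. by apply: contra_neq c_neq0 => ha0; rewrite -(h_shift a) ha0 mul0r. Qed.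

Lemma f_neq0 (a b : R) : nondeg a b -> f a b != 0.
Proof.
move=> nab; apply/eqP => fab0; move/negP: c_neq0; apply.
by rewrite -oppr_eq0 -(f_shift nab) fab0 mul0r.
Qed.

Lemma hDpi (a : R) : h (a + pi) = c / h a.
Proof. by rewrite -(h_shift a) mulrAC divff ?mul1r ?h_neq0. Qed.

Lemma fDpi (a b : R) : nondeg a b -> f (a + pi) b = - c / f a b.
Proof. by move=> nab; rewrite -(f_shift nab) mulrAC divff ?mul1r ?f_neq0. Qed.

Definition consistency_defect (a b d : R) :=
  f a b * h a * h b + f b d * h b * h d + f d a * h d * h a - f a b * f b d * f d a.

Lemma cube_differences (a b d : R) (x0 x1 x2 x3 x12 x13 x23 y z w : R[i]) :
  nondeg a b -> nondeg b d -> nondeg d a ->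
  quad f g h a b x0 x12 x1 x2 ->
  quad f g h a d x0 x13 x1 x3 ->
  quad f g h b d x0 x23 x2 x3 ->
  quad f g h (b + pi) d x12 x13 x1 y ->
  quad f g h (a + pi) d x12 x23 x2 z ->
  quad f g h (a + pi) b x13 x23 x3 w ->
  y - z = c / (f a b * f a d * f b d * h d) * (x1 / h b - x2 / h a)
            * consistency_defect a b d /\
  z - w = c / (f a b * f a d * f b d * h a) * (x2 / h d - x3 / h b)
            * consistency_defect a b d.
Proof.
move=> nab nbd nda; have nad := nondeg_sym nda.
move=> Q12 Q13 Q23 /(quad_xW'E (h_neq0 d)) -> /(quad_xW'E (h_neq0 d)) ->.
move=> /(quad_xW'E (h_neq0 b)) ->.
move: Q12 Q13 Q23 => /(quad_xB'E (f_neq0 nab)) -> /(quad_xB'E (f_neq0 nad)) ->.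
move=> /(quad_xB'E (f_neq0 nbd)) ->.
rewrite (g_def nab) (g_def nad) (g_def nbd) (g_def (nondegDpi nbd)).
rewrite (g_def (nondegDpi nad)) (g_def (nondegDpi nab)).
rewrite (fDpi nbd) (fDpi nad) (fDpi nab) !hDpi (f_anti nad) /consistency_defect.
by split; field; rewrite !h_neq0 (f_neq0 nab) (f_neq0 nbd) (f_neq0 nda) i_neq0.
Qed.

Lemma consistent3D_iff (a b d : R) : nondeg a b -> nondeg b d -> nondeg d a ->
  consistent3D f g h a b d <-> consistency_defect a b d = 0.
Proof.
move=> nab nbd nda; rewrite consistent3D_quadE; split=> [consistent | defect0].
  have nad := nondeg_sym nda.
  have [x12 Q12] := quad_solvable_xB' (f_neq0 nab) 0 (h b) 0.
  have [x13 Q13] := quad_solvable_xB' (f_neq0 nad) 0 (h b) 0.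
  have [x23 Q23] := quad_solvable_xB' (f_neq0 nbd) 0 0 0.
  have [y Qy] := quad_solvable_xW' (h_neq0 d) (b + pi) x12 x13 (h b).
  have [z Qz] := quad_solvable_xW' (h_neq0 d) (a + pi) x12 x23 0.
  have [w Qw] := quad_solvable_xW' (h_neq0 b) (a + pi) x13 x23 0.
  have [yz _] := consistent _ _ _ _ _ _ _ Q12 Q13 Q23 _ _ _ Qy Qz Qw.
  have [] := cube_differences nab nbd nda Q12 Q13 Q23 Qy Qz Qw.
  have K_neq0 : c / (f a b * f a d * f b d * h d) != 0.
    by rewrite mulf_neq0 ?invr_neq0 ?mulf_neq0 ?h_neq0
               ?(f_neq0 nab) ?(f_neq0 nad) ?(f_neq0 nbd).
  rewrite yz subrr divff ?h_neq0 // mul0r subr0 mulr1 => /esym/eqP.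
  by rewrite mulf_eq0 (negbTE K_neq0) => /eqP.
move=> ? ? ? ? ? ? ? Q12 Q13 Q23 ? ? ? Qy Qz Qw.
have [] := cube_differences nab nbd nda Q12 Q13 Q23 Qy Qz Qw.
by rewrite defect0 !mulr0 => /subr0_eq -> /subr0_eq ->.
Qed.

Lemma g_cycle_sum (a b d : R) : nondeg a b -> nondeg b d -> nondeg d a ->
  g a b + g b d + g d a
  = c^-1 * (f a b * h a * h b + f b d * h b * h d + f d a * h d * h a).
Proof. by move=> nab nbd nda; rewrite (g_def nab) (g_def nbd) (g_def nda); ring. Qed.

End QuadCube.


Theorem theorem1 (R : realType) (f g : R -> R -> R[i]) (h : R -> R[i])
  (c : R[i]) :
  c != 0 ->
  (forall a b, f (a + 2 * pi) b = f a b /\ f a (b + 2 * pi) = f a b) ->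
  (forall a b, g (a + 2 * pi) b = g a b /\ g a (b + 2 * pi) = g a b) ->
  (forall a, h (a + 2 * pi) = h a) ->
  (forall a b, nondeg a b -> f a b = - f b a) ->
  (forall a b, nondeg a b -> g a b = - g b a) ->
  (forall a, h a * h (a + pi) = c) ->
  (forall a b, nondeg a b -> f a b * f (a + pi) b = - c) ->
  (forall a b, nondeg a b -> g a b = c^-1 * f a b * h a * h b) ->
  ((forall a b d, nondeg a b -> nondeg b d -> nondeg d a ->
       consistent3D f g h a b d)
   <->
   (forall a b d, nondeg a b -> nondeg b d -> nondeg d a ->
       f a b * h a * h b + f b d * h b * h d + f d a * h d * h a
       = f a b * f b d * f d a))
  /\
  ((forall a b d, nondeg a b -> nondeg b d -> nondeg d a ->
       f a b * h a * h b + f b d * h b * h d + f d a * h d * h a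
       = f a b * f b d * f d a)
   <->
   (forall a b d, nondeg a b -> nondeg b d -> nondeg d a ->
       g a b + g b d + g d a = c^-1 * (f a b * f b d * f d a))).
Proof.
move=> c_neq0 f_per g_per h_per f_anti _ h_shift f_shift g_def.
have cube_iff := consistent3D_iff f_per g_per h_per c_neq0 f_anti h_shift f_shift g_def.
split; split=> H a b d nab nbd nda.
- by apply/subr0_eq/(cube_iff _ _ _ nab nbd nda)/H.
- apply/(cube_iff _ _ _ nab nbd nda).
  by rewrite /consistency_defect (H a b d nab nbd nda) subrr.
- by rewrite (g_cycle_sum g_def nab nbd nda) (H a b d nab nbd nda).
- apply: (mulfI (invr_neq0 c_neq0)).
  by rewrite -(g_cycle_sum g_def nab nbd nda) (H a b d nab nbd nda).
Qed.
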